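(* Let $d>2$, let $\alpha,\lambda\in\overline{\mathbb Q}^*$, let $|\cdot|_v$ be an absolute value on $\overline{\mathbb Q}$, and let $L=\max\{|\alpha|_v,1/|\alpha|_v\}$. Then for all $n_0\ge1$, $$\left|\lim_{n\to\infty}\frac{\log M_{n,v}}{d^n}-\frac{\log M_{n_0,v}}{d^{n_0}}\right|\le(3d-2)\log(2L).$$
   Context: Define $A_0=\alpha$, $B_0=1$, and for $n\ge0$, $A_{n+1}=A_n^d+\lambda B_n^d$, $B_{n+1}=A_nB_n^{d-1}$ (so $[A_n:B_n]$ is the $n$-th iterate of $\alpha$ under $z\mapsto(z^d+\lambda)/z$). Set $M_{n,v}=\max\{|A_n|_v,|B_n|_v\}$. *)

From HB Require Import structures.
From mathcomp Require Import all_boot all_order all_algebra all_field.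
From mathcomp Require Import all_classical all_reals all_analysis.
Set Implicit Arguments. Unset Strict Implicit. Unset Printing Implicit Defensive.
Import Order.TTheory GRing.Theory Num.Theory numFieldNormedType.Exports.
Local Open Scope ring_scope.

(* Qbar is modelled by algC (the algebraic closure of Q in MathComp). *)

Definition is_absval (R : realType) (v : algC -> R) : Prop :=
  [/\ forall x, 0 <= v x,
      forall x, v x = 0 <-> x = 0,
      forall x y, v (x * y) = v x * v y &
      forall x y, v (x + y) <= v x + v y].

Fixpoint AB (d : nat) (alpha lambda : algC) (n : nat) : algC * algC :=
  match n with
  | 0 => (alpha, 1)
  | n.+1 => let: (A, B) := AB d alpha lambda n in
            (A ^+ d + lambda * B ^+ d, A * B ^+ d.-1)
  end.

Definition Mnv (R : realType) (v : algC -> R) (d : nat) (alpha lambda : algC)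
  (n : nat) : R :=
  Num.max (v (AB d alpha lambda n).1) (v (AB d alpha lambda n).2).

From HB Require Import structures.
From mathcomp Require Import all_boot all_order all_algebra all_field.
From mathcomp Require Import all_classical all_reals all_analysis.
From mathcomp Require Import lra ring zify.
Import Order.TTheory GRing.Theory Num.Theory numFieldNormedType.Exports.
Local Open Scope classical_set_scope.
Local Open Scope ring_scope.
Set Implicit Arguments. Unset Strict Implicit.

(* Write a_n = |A_n|_v, b_n = |B_n|_v, r = |lambda|_v and K = 2L.  For n >= 1,
   M_{n+1} and M_n^d agree up to the factor T_n = K^((d+2)(d-1)^n).  The upper
   bound is the triangle inequality; the lower bound uses
   |A_{n+1}|_v >= | a_n^d - r b_n^d | and depends on the size of r:
   - if 2r <= 1, by induction either b_m <= Q_m a_m, where Q_m = K^((d-1)^m)/2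
     mimics the power d-1 taken by the ratio b_m/a_m at each step, or the
     lambda-term r b_m^d dominates;
   - if 1/2 < r < K^(2d), the constants depending on r are absorbed in T_n;
   - if r >= K^(2d), then 2 b_n <= a_n and 2 r b_n^d <= a_n^d for all n >= 1,
     so A_n^d dominates and M_{n+1} is within a factor 2 of M_n^d.
   Hence |log M_{n+1} - d log M_n| <= (d+2)(d-1)^n log K, and dividing by
   d^(n+1) the increments of log M_n / d^n telescope: the limit exists and
   differs from the n0-th term by at most (d+2) log K ((d-1)/d)^n0, which is
   at most (3d-2) log(2L). *)

Lemma ler_wpXn2r (R : numDomainType) n (x y : R) :
  0 <= x -> x <= y -> x ^+ n <= y ^+ n.
Proof. by move=> x_ge0 xy; rewrite lerXn2r // nnegrE // (le_trans x_ge0). Qed.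

Lemma exprS_pred (R : numDomainType) d (x : R) : (0 < d)%N -> x ^+ d = x * x ^+ d.-1.
Proof. by move=> d_gt0; rewrite -{1}(prednK d_gt0) exprS. Qed.

Section AbsoluteValue.
Variables (R : realType) (v : algC -> R).
Hypothesis hv : is_absval v.

Lemma absval_ge0 x : 0 <= v x.
Proof. by case: hv. Qed.

Lemma absval_gt0 x : x != 0 -> 0 < v x.
Proof.
case: hv => _ v0 _ _ /negP nz0; rewrite lt_def absval_ge0 andbT.
by apply/negP => /eqP /v0 /eqP.
Qed.

Lemma absvalM x y : v (x * y) = v x * v y.
Proof. by case: hv. Qed.

Lemma absval_triangle x y : v (x + y) <= v x + v y.
Proof. by case: hv. Qed.

Lemma absval1 : v 1 = 1.
Proof.
have v1_neq0 : v 1 != 0 by rewrite gt_eqF // absval_gt0 ?oner_eq0.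
by apply: (mulfI v1_neq0); rewrite -absvalM !mulr1.
Qed.

Lemma absvalX x n : v (x ^+ n) = v x ^+ n.
Proof. by elim: n => [|n IHn]; rewrite ?absval1 // !exprS absvalM IHn. Qed.

Lemma absvalN x : v (- x) = v x.
Proof.
have vN1 : v (-1) = 1.
  have : v (-1) ^+ 2 = 1 by rewrite -absvalX sqrrN expr1n absval1.
  by move/eqP; rewrite sqrf_eq1 => /orP[/eqP //|/eqP h]; have := absval_ge0 (-1); lra.
by rewrite -mulN1r absvalM vN1 mul1r.
Qed.

Lemma absval_dist_le x y : `|v x - v y| <= v (x + y).
Proof.
have := absval_triangle (x + y) (- y); have := absval_triangle (y + x) (- x).
by rewrite !absvalN !addrK [y + x]addrC ler_norml; lra.
Qed.

End AbsoluteValue.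

Lemma AB_S d alpha lambda n :
  AB d alpha lambda n.+1 =
  ((AB d alpha lambda n).1 ^+ d + lambda * (AB d alpha lambda n).2 ^+ d,
   (AB d alpha lambda n).1 * (AB d alpha lambda n).2 ^+ d.-1).
Proof. by rewrite /=; case: (AB d alpha lambda n). Qed.

Lemma AB_neq0 d alpha lambda n : (0 < d)%N -> lambda != 0 ->
  AB d alpha lambda n != (0, 0).
Proof.
move=> d_gt0 lambda_neq0; elim: n => [|n]; first by rewrite xpair_eqE oner_eq0 andbF.
rewrite AB_S; case: (AB d alpha lambda n) => A B /=.
rewrite !xpair_eqE negb_and => nz; apply/nandP.
have [A_eq0|A_neq0] := eqVneq A 0.
  rewrite A_eq0 eqxx /= in nz.
  by left; rewrite A_eq0 expr0n gtn_eqF //= add0r mulf_neq0 // expf_neq0.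
have [B_eq0|B_neq0] := eqVneq B 0; last by right; rewrite mulf_neq0 // expf_neq0.
by left; rewrite B_eq0 expr0n gtn_eqF //= mulr0 addr0 expf_neq0.
Qed.

Lemma Mnv_gt0 (R : realType) (v : algC -> R) d alpha lambda n :
  is_absval v -> (0 < d)%N -> lambda != 0 -> 0 < Mnv v d alpha lambda n.
Proof.
move=> hv d_gt0 lambda_neq0; have := AB_neq0 alpha n d_gt0 lambda_neq0.
rewrite /Mnv; case: (AB d alpha lambda n) => A B /=.
rewrite xpair_eqE negb_and lt_max => /orP[] /(absval_gt0 hv) ->; rewrite ?orbT //.
Qed.

Section AbsoluteRecurrence.
Variables (R : realType) (v : algC -> R) (d : nat) (alpha lambda : algC).
Hypothesis hv : is_absval v.

Lemma absval_AB1_le n :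
  v (AB d alpha lambda n.+1).1 <=
  v (AB d alpha lambda n).1 ^+ d + v lambda * v (AB d alpha lambda n).2 ^+ d.
Proof. by rewrite AB_S /= -!(absvalX hv) -absvalM // absval_triangle. Qed.

Lemma absval_AB1_ge n :
  `|v (AB d alpha lambda n).1 ^+ d - v lambda * v (AB d alpha lambda n).2 ^+ d|
    <= v (AB d alpha lambda n.+1).1.
Proof. by rewrite AB_S /= -!(absvalX hv) -(absvalM hv) absval_dist_le. Qed.

Lemma absval_AB2 n :
  v (AB d alpha lambda n.+1).2 =
  v (AB d alpha lambda n).1 * v (AB d alpha lambda n).2 ^+ d.-1.
Proof. by rewrite AB_S /= (absvalM hv) (absvalX hv). Qed.

End AbsoluteRecurrence.

Section OneStep.
Variables (R : realType) (d : nat) (a b r a' : R).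

Lemma max_step_le : (0 < d)%N -> 0 <= a -> 0 <= b -> 0 <= r ->
  a' <= a ^+ d + r * b ^+ d ->
  Num.max a' (a * b ^+ d.-1) <= (1 + r) * Num.max a b ^+ d.
Proof.
move=> d_gt0 a_ge0 b_ge0 r_ge0 a'_le; set M := Num.max a b.
have aM : a <= M by rewrite le_max lexx.
have bM : b <= M by rewrite le_max lexx orbT.
have M_ge0 : 0 <= M by apply: le_trans aM.
have aMd := ler_wpXn2r d a_ge0 aM; have bMd := ler_wpXn2r d b_ge0 bM.
have Md_ge0 := exprn_ge0 d M_ge0; have bd1_ge0 := exprn_ge0 d.-1 b_ge0.
have abM : a * b ^+ d.-1 <= M ^+ d.
  by rewrite (exprS_pred M d_gt0) ler_pM // ler_wpXn2r.
rewrite ge_max; apply/andP; split; nra.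
Qed.

Lemma max_step_ge_mid : (0 < d)%N -> 0 <= a -> 0 <= b -> 1 <= 2 * r ->
  `|a ^+ d - r * b ^+ d| <= a' ->
  Num.max a b ^+ d <= 4 * Num.max 1 r * Num.max a' (a * b ^+ d.-1).
Proof.
move=> d_gt0 a_ge0 b_ge0 r_ge_half /ler_normlP[a'_geN a'_ge].
set M' := Num.max a' _; set m := Num.max 1 r.
have m_ge1 : 1 <= m by rewrite le_max lexx.
have r_le_m : r <= m by rewrite le_max lexx orbT.
have a'M : a' <= M' by rewrite le_max lexx.
have abM : a * b ^+ d.-1 <= M' by rewrite le_max lexx orbT.
have bd1_ge0 := exprn_ge0 d.-1 b_ge0; have bd_ge0 := exprn_ge0 d b_ge0.
have ad_ge0 := exprn_ge0 d a_ge0.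
have M'_ge0 : 0 <= M' by rewrite (le_trans _ abM) ?mulr_ge0.
have r_ge0 : 0 <= r by lra.
have M'_le : M' <= m * M' by rewrite ler_peMl.
have rM'_le : r * M' <= m * M' by rewrite ler_wpM2r.
have rabM : r * (a * b ^+ d.-1) <= r * M' by rewrite ler_wpM2l.
case: (leP b a) => [ba|ab].
  have bd_le : b ^+ d <= a * b ^+ d.-1 by rewrite (exprS_pred b d_gt0); nra.
  have rbd_le : r * b ^+ d <= r * (a * b ^+ d.-1) by rewrite ler_wpM2l.
  by rewrite -mulrA; case: (leP (2 * (r * b ^+ d)) (a ^+ d)) => _; lra.
case: (leP (2 * a ^+ d) (r * b ^+ d)) => [|ad_big]; first nra.
suff : b ^+ d <= 4 * (a * b ^+ d.-1) by nra.
rewrite leNgt; apply/negP => b_big.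
have a_lt : 4 * a < b.
  rewrite (exprS_pred b d_gt0) in b_big; rewrite ltNge; apply/negP => b_le; nra.
have := ler_wpXn2r d (mulr_ge0 (ler0n _ 4) a_ge0) (ltW a_lt); rewrite exprMn => ab_d.
have four_d : 4 <= (4 : R) ^+ d by apply: (ler_eXnr d_gt0); rewrite ler1n.
nra.
Qed.

Lemma small_ratio_step (Q : R) : (0 < d)%N -> 0 <= a -> 0 <= b -> 0 <= r ->
  1 <= Q -> `|a ^+ d - r * b ^+ d| <= a' -> b <= Q * a -> 2 * r * Q ^+ d <= 1 ->
  a * b ^+ d.-1 <= 2 * Q ^+ d.-1 * a'.
Proof.
move=> d_gt0 a_ge0 b_ge0 r_ge0 Q_ge1 /ler_normlP[_ a'_ge] bQa rQ.
have Q_ge0 : 0 <= Q by lra.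
have := ler_wpXn2r d b_ge0 bQa; have := ler_wpXn2r d.-1 b_ge0 bQa.
rewrite !exprMn => bd1_le bd_le.
have ad_ge0 := exprn_ge0 d a_ge0; have Qd1_ge0 := exprn_ge0 d.-1 Q_ge0.
have ad_le : a ^+ d <= 2 * a'.
  have : r * b ^+ d <= r * (Q ^+ d * a ^+ d) by rewrite ler_wpM2l.
  have := ler_wpM2r ad_ge0 rQ; rewrite mul1r; lra.
have : a * b ^+ d.-1 <= a * (Q ^+ d.-1 * a ^+ d.-1) by rewrite ler_wpM2l.
have -> : a * (Q ^+ d.-1 * a ^+ d.-1) = Q ^+ d.-1 * a ^+ d.
  by rewrite (exprS_pred a d_gt0); ring.
have : Q ^+ d.-1 * a ^+ d <= Q ^+ d.-1 * (2 * a') by rewrite ler_wpM2l.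
lra.
Qed.

Lemma lambda_term_le_small : (0 < d)%N -> 0 <= a -> 0 <= b -> 0 <= r ->
  2 * r <= 1 -> `|a ^+ d - r * b ^+ d| <= a' ->
  r * b ^+ d <= 2 * Num.max a' (a * b ^+ d.-1).
Proof.
move=> d_gt0 a_ge0 b_ge0 r_ge0 r_le_half /ler_normlP[a'_geN _].
set M' := Num.max a' _.
have a'M : a' <= M' by rewrite le_max lexx.
have abM : a * b ^+ d.-1 <= M' by rewrite le_max lexx orbT.
have bd1_ge0 := exprn_ge0 d.-1 b_ge0; have bd_ge0 := exprn_ge0 d b_ge0.
have [|ad_big] := leP (2 * a ^+ d) (r * b ^+ d); first lra.
suff : r * b ^+ d <= 2 * (a * b ^+ d.-1) by lra.
rewrite leNgt; apply/negP => lambda_big.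
have a_le : a <= r / 2 * b.
  rewrite (exprS_pred b d_gt0) in lambda_big; rewrite leNgt; apply/negP => a_gt.
  have : r / 2 * b * b ^+ d.-1 <= a * b ^+ d.-1 by rewrite ler_wpM2r // ltW.
  nra.
have rd_le : (r / 2) ^+ d <= r / 2.
  have : (r / 2) ^+ d.-1 <= 1 by apply: exprn_ile1; lra.
  rewrite (exprS_pred _ d_gt0) => rd1_le.
  have := ler_wpM2l (_ : 0 <= r / 2) rd1_le; rewrite mulr1; apply; lra.
have := ler_wpXn2r d a_ge0 a_le; rewrite exprMn.
have := ler_wpM2r bd_ge0 rd_le; nra.
Qed.

Lemma max_step_ge_small (Q : R) : (0 < d)%N -> 0 <= a -> 0 <= b -> 0 <= r ->
  2 * r <= 1 -> 1 <= Q -> `|a ^+ d - r * b ^+ d| <= a' ->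
  (b <= Q * a \/ 1 <= 2 * r * Q ^+ d) ->
  Num.max a b ^+ d <= 4 * Q ^+ d * Num.max a' (a * b ^+ d.-1).
Proof.
move=> d_gt0 a_ge0 b_ge0 r_ge0 r_le_half Q_ge1 a'_ge ratio.
have lambda_le := lambda_term_le_small d_gt0 a_ge0 b_ge0 r_ge0 r_le_half a'_ge.
move/ler_normlP: a'_ge => [_ a'_ge].
set M' := Num.max a' _ in lambda_le *.
have a'M : a' <= M' by rewrite le_max lexx.
have abM : a * b ^+ d.-1 <= M' by rewrite le_max lexx orbT.
have M'_ge0 : 0 <= M' by rewrite (le_trans _ abM) ?mulr_ge0 ?exprn_ge0.
have bd_ge0 := exprn_ge0 d b_ge0.
have Qd_ge1 : 1 <= Q ^+ d by apply: exprn_ege1.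
have M'_le : M' <= Q ^+ d * M' by rewrite ler_peMl.
have Q_ge0 : 0 <= Q by lra.
case: (leP b a) => [ba|ab].
  have rbd_le : r * b ^+ d <= r * a ^+ d by rewrite ler_wpM2l // ler_wpXn2r.
  have ad_ge0 := exprn_ge0 d a_ge0.
  rewrite -mulrA; nra.
case: ratio => [bQa|lambda_dom].
  have bd_le : b ^+ d <= Q * (a * b ^+ d.-1).
    by rewrite (exprS_pred b d_gt0) mulrA; apply: ler_wpM2r; rewrite ?exprn_ge0.
  have QabM : Q * (a * b ^+ d.-1) <= Q * M' by rewrite ler_wpM2l.
  have QM' : Q * M' <= Q ^+ d * M' by rewrite ler_wpM2r // ler_eXnr.
  rewrite -mulrA; lra.
have bd_le : b ^+ d <= b ^+ d * (2 * r * Q ^+ d) by rewrite ler_peMr.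
have lambda_le' : 2 * Q ^+ d * (r * b ^+ d) <= 2 * Q ^+ d * (2 * M').
  by rewrite ler_wpM2l // mulr_ge0 // ?ler0n // exprn_ge0.
have E1 : b ^+ d * (2 * r * Q ^+ d) = 2 * Q ^+ d * (r * b ^+ d) by ring.
have E2 : 2 * Q ^+ d * (2 * M') = 4 * Q ^+ d * M' by ring.
lra.
Qed.

Lemma max_step_large : (0 < d)%N -> 0 <= b -> 0 <= r -> b <= a ->
  a' <= a ^+ d + r * b ^+ d -> `|a ^+ d - r * b ^+ d| <= a' ->
  2 * r * b ^+ d <= a ^+ d ->
  Num.max a b ^+ d <= 2 * Num.max a' (a * b ^+ d.-1) /\
  Num.max a' (a * b ^+ d.-1) <= 2 * Num.max a b ^+ d.
Proof.
move=> d_gt0 b_ge0 r_ge0 ba a'_le /ler_normlP[_ a'_ge] rb.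
have -> : Num.max a b = a by apply/max_idPl.
have bd_le : r * b ^+ d <= a ^+ d / 2 by lra.
have abd : a * b ^+ d.-1 <= a ^+ d.
  by rewrite (exprS_pred a d_gt0) ler_wpM2l ?(le_trans b_ge0) // ler_wpXn2r.
have a'M : a' <= Num.max a' (a * b ^+ d.-1) by rewrite le_max lexx.
by rewrite ge_max; split; [lra | apply/andP; split; lra].
Qed.

Lemma large_invariant_step : (2 < d)%N -> 0 <= a -> 0 <= b -> 0 <= r ->
  `|a ^+ d - r * b ^+ d| <= a' -> 2 * b <= a -> 2 * r * b ^+ d <= a ^+ d ->
  2 * (a * b ^+ d.-1) <= a' /\ 2 * r * (a * b ^+ d.-1) ^+ d <= a' ^+ d.
Proof.
case: d => [|[|[|k]]] // _ a_ge0 b_ge0 r_ge0 /ler_normlP[_ a'_ge] ba rb /=.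
have t_ge8 : (8 : R) <= 2 ^+ k.+3.
  by rewrite !exprS; have := exprn_ege1 k (ler1n R 2); lra.
set X := a ^+ k.+3 in a'_ge rb *; set Y := b ^+ k.+3 in a'_ge rb *.
set t := (2 : R) ^+ k.+3 in t_ge8 *.
have X_ge0 : 0 <= X by apply: exprn_ge0.
have Y_ge0 : 0 <= Y by apply: exprn_ge0.
have X_le : X <= 2 * a' by lra.
have b_le : b <= a / 2 by lra.
have Y_le : Y <= X / t by have := ler_wpXn2r k.+3 b_ge0 b_le; rewrite exprMn exprVn.
split.
  have bd1_le : b ^+ k.+2 <= a ^+ k.+2 / 4.
    apply: le_trans (ler_wpXn2r k.+2 b_ge0 b_le) _; rewrite exprMn exprVn.
    rewrite ler_wpM2l ?exprn_ge0 // lef_pV2 ?posrE ?exprn_gt0 // !exprS.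
    by have := exprn_ege1 k (ler1n R 2); nra.
  have : a * b ^+ k.+2 <= a * (a ^+ k.+2 / 4) by apply: ler_wpM2l.
  have : X = a * a ^+ k.+2 by rewrite /X exprS.
  lra.
have -> : (a * b ^+ k.+2) ^+ k.+3 = X * (Y * Y ^+ k.+1).
  by rewrite exprMn -exprM mulnC exprM -exprS.
have Yk_le : Y ^+ k.+1 <= X ^+ k.+1 / t.
  apply: le_trans (ler_wpXn2r k.+1 Y_ge0 Y_le) _; rewrite expr_div_n.
  rewrite ler_wpM2l ?exprn_ge0 // lef_pV2 ?posrE ?exprn_gt0 //; try lra.
  by apply: ler_eXnr => //; lra.
have Yk_ge0 : 0 <= Y ^+ k.+1 by apply: exprn_ge0.
(* [2 r Y <= X] absorbs one factor [Y], and [Y <= X / 2^d] each of the other [k+1]. *)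
have : 2 * r * (X * (Y * Y ^+ k.+1)) <= X * X * Y ^+ k.+1.
  have -> : 2 * r * (X * (Y * Y ^+ k.+1)) = 2 * r * Y * (X * Y ^+ k.+1) by ring.
  by rewrite -[X * X * _]mulrA; apply: ler_wpM2r => //; apply: mulr_ge0.
have : X * X * Y ^+ k.+1 <= X * X * (X ^+ k.+1 / t).
  by apply: ler_wpM2l => //; apply: mulr_ge0.
have -> : X * X * (X ^+ k.+1 / t) = (X / 2) ^+ k.+3.
  by rewrite /t expr_div_n mulrA; congr (_ * _); rewrite !exprS; ring.
have : (X / 2) ^+ k.+3 <= a' ^+ k.+3 by apply: ler_wpXn2r; lra.
lra.
Qed.

Lemma large_invariant_start (K : R) : (2 < d)%N -> 2 <= K -> 0 <= a -> a <= K ->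
  (K ^+ d) ^+ 2 <= r -> r - a ^+ d <= a' ->
  2 * a <= a' /\ 2 * r * a ^+ d <= a' ^+ d.
Proof.
case: d => [|[|[|k]]] // _ K_ge2 a_ge0 aK Kr a'_ge.
have K_ge0 : 0 <= K by lra.
have K3_le : K * K * K <= K ^+ k.+3.
  rewrite !exprS mulrA mulrA ler_peMr ?mulr_ge0 //.
  by apply: exprn_ege1; lra.
set c := K ^+ k.+3 in Kr K3_le *.
have c_ge8 : 8 <= c by nra.
have ad_le : a ^+ k.+3 <= c by apply: ler_wpXn2r.
have ad_ge0 : 0 <= a ^+ k.+3 by apply: exprn_ge0.
have c_le : 2 * c <= r by nra.
have r_le : r / 2 <= a' by lra.
split; first nra.
have r_ge : 1 <= r / 2 by nra.
have : (r / 2) ^+ 3 <= (r / 2) ^+ k.+3.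
  by rewrite -(addn3 k) exprD ler_peMl ?exprn_ge0 ?exprn_ege1 //; lra.
have : (r / 2) ^+ k.+3 <= a' ^+ k.+3 by apply: ler_wpXn2r => //; lra.
have : 2 * r * a ^+ k.+3 <= 2 * r * c by apply: ler_wpM2l => //; lra.
have : 2 * r * c <= (r / 2) ^+ 3.
  rewrite !exprS expr0 mulr1.
  have : 16 * c <= r * r by nra.
  nra.
lra.
Qed.
End OneStep.

Section StepBound.
Variables (R : realType) (d : nat) (a b : nat -> R) (r K : R).
Hypotheses (d_gt2 : (2 < d)%N) (K_ge2 : 2 <= K) (r_ge0 : 0 <= r).
Hypotheses (a_ge0 : forall n, 0 <= a n) (b_ge0 : forall n, 0 <= b n).
Hypotheses (b0 : b 0 = 1) (a0_ge : 1 <= K / 2 * a 0) (a0_le : a 0 <= K / 2).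
Hypothesis a_le : forall n, a n.+1 <= a n ^+ d + r * b n ^+ d.
Hypothesis a_ge : forall n, `|a n ^+ d - r * b n ^+ d| <= a n.+1.
Hypothesis b_S : forall n, b n.+1 = a n * b n ^+ d.-1.

Let M n := Num.max (a n) (b n).
Let T n := K ^+ (d.+2 * d.-1 ^ n).
Let Q m := K ^+ (d.-1 ^ m) / 2.

Let d_gt0 : (0 < d)%N. Proof. exact: ltnW (ltnW d_gt2). Qed.

Lemma M_S n : M n.+1 = Num.max (a n.+1) (a n * b n ^+ d.-1).
Proof. by rewrite /M b_S. Qed.

Lemma K_ge2_expn m : (0 < m)%N -> 2 <= K ^+ m.
Proof.
move=> m_gt0; apply: le_trans K_ge2 _; rewrite -{1}(expr1 K).
by apply: ler_weXn2l; [have := K_ge2; lra | exact: m_gt0].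
Qed.

Lemma T_ge n : (1 <= n)%N -> K ^+ (2 * d + 2) <= T n.
Proof.
move=> n_ge1; apply: ler_weXn2l; first by have := K_ge2; lra.
have : (d.-1 <= d.-1 ^ n)%N by case: n n_ge1 => // n _; rewrite expnS leq_pmulr ?expn_gt0 //; lia.
have := d_gt2; nia.
Qed.

Lemma Q_ge1 m : 1 <= Q m.
Proof.
have : 2 <= K ^+ (d.-1 ^ m) by apply: K_ge2_expn; rewrite expn_gt0; have := d_gt2; lia.
by rewrite /Q; lra.
Qed.

Lemma Q_double m : 2 * Q m = K ^+ (d.-1 ^ m).
Proof. by rewrite /Q mulrC divfK ?pnatr_eq0. Qed.

Lemma Q_growth m : 2 * Q m ^+ d.-1 <= Q m.+1.
Proof.
have -> : Q m.+1 = (2 * Q m) ^+ d.-1 / 2.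
  by rewrite Q_double -exprM mulnC -expnS.
have two_pow : (2 : R) ^+ 2 <= 2 ^+ d.-1 by apply: ler_weXn2l; rewrite ?ler1n //; lia.
have Qd_ge0 := exprn_ge0 d.-1 (le_trans ler01 (Q_ge1 m)).
rewrite expr2 in two_pow; rewrite [(2 * Q m) ^+ _]exprMn; nra.
Qed.

Lemma Q_leS m : Q m <= Q m.+1.
Proof.
apply: le_trans (Q_growth m); have := Q_ge1 m.
have : Q m <= Q m ^+ d.-1 by apply: ler_eXnr; [lia | exact: Q_ge1].
lra.
Qed.

Lemma small_invariant m : 2 * r <= 1 -> b m <= Q m * a m \/ 1 <= 2 * r * Q m ^+ d.
Proof.
move=> r_le_half; elim: m => [|m IH].
  by left; rewrite b0 /Q expn0 expr1.
have [big|small] := leP 1 (2 * r * Q m ^+ d).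
  right; apply: le_trans big _; rewrite ler_wpM2l ?mulr_ge0 //.
  by rewrite ler_wpXn2r ?Q_leS // (le_trans ler01 (Q_ge1 m)).
case: IH => [IH|]; last by lra.
left; rewrite b_S.
have := small_ratio_step d_gt0 (a_ge0 m) (b_ge0 m) r_ge0 (Q_ge1 m) (a_ge m) IH (ltW small).
by move/le_trans; apply; apply: ler_wpM2r; [exact: a_ge0 | exact: Q_growth].
Qed.

Lemma M_ge0 n : 0 <= M n.
Proof. by rewrite le_max a_ge0. Qed.

Lemma step_lower_small n : 2 * r <= 1 -> M n ^+ d <= T n * M n.+1.
Proof.
move=> r_le_half; have Qd_ge0 := exprn_ge0 d (le_trans ler01 (Q_ge1 n)).
have := max_step_ge_small d_gt0 (a_ge0 n) (b_ge0 n) r_ge0 r_le_half (Q_ge1 n) (a_ge n)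
  (small_invariant n r_le_half).
rewrite -M_S => /le_trans; apply; rewrite ler_wpM2r ?M_ge0 //.
have four_le : (4 : R) <= 2 ^+ d.
  apply: le_trans (_ : 2 ^+ 2 <= _); first by rewrite expr2; lra.
  by apply: ler_weXn2l; rewrite ?ler1n //; lia.
apply: le_trans (_ : (2 * Q n) ^+ d <= _).
  by rewrite [(2 * _) ^+ d]exprMn; apply: ler_wpM2r.
rewrite Q_double -exprM; apply: ler_weXn2l; first by have := K_ge2; lra.
nia.
Qed.

Lemma T_ge_max1r n : (1 <= n)%N -> r < (K ^+ d) ^+ 2 -> 4 * Num.max 1 r <= T n.
Proof.
move=> n_ge1 r_lt; apply: le_trans (T_ge n_ge1).
rewrite exprD mulnC exprM.
have K2 : 4 <= K ^+ 2 by have := K_ge2; rewrite expr2; nra.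
have Kd : 1 <= (K ^+ d) ^+ 2.
  by apply: exprn_ege1; apply: le_trans (K_ge2_expn d_gt0); rewrite ler1n.
have m_le : Num.max 1 r <= (K ^+ d) ^+ 2 by rewrite ge_max Kd ltW.
have m_ge0 : 0 <= Num.max 1 r by rewrite le_max ler01.
nra.
Qed.

Lemma step_upper_moderate n : (1 <= n)%N -> r < (K ^+ d) ^+ 2 ->
  M n.+1 <= T n * M n ^+ d.
Proof.
move=> n_ge1 r_lt; rewrite M_S.
apply: le_trans (max_step_le d_gt0 (a_ge0 n) (b_ge0 n) r_ge0 (a_le n)) _.
rewrite ler_wpM2r ?exprn_ge0 ?M_ge0 //.
have T_ge' := T_ge_max1r n_ge1 r_lt.
have m1 : 1 <= Num.max 1 r by rewrite le_max lexx.
have m2 : r <= Num.max 1 r by rewrite le_max lexx orbT.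
lra.
Qed.

Lemma step_lower_moderate n : (1 <= n)%N -> 1 <= 2 * r -> r < (K ^+ d) ^+ 2 ->
  M n ^+ d <= T n * M n.+1.
Proof.
move=> n_ge1 r_ge_half r_lt.
have := max_step_ge_mid d_gt0 (a_ge0 n) (b_ge0 n) r_ge_half (a_ge n).
rewrite -M_S => /le_trans; apply.
by rewrite ler_wpM2r ?M_ge0 ?T_ge_max1r.
Qed.

Lemma large_invariant m : (K ^+ d) ^+ 2 <= r ->
  2 * b m.+1 <= a m.+1 /\ 2 * r * b m.+1 ^+ d <= a m.+1 ^+ d.
Proof.
move=> r_ge; elim: m => [|m [IH1 IH2]].
  rewrite b_S b0 expr1n mulr1.
  have a0K : a 0 <= K by have := K_ge2; have := a0_le; lra.
  apply: large_invariant_start d_gt2 K_ge2 (a_ge0 0) a0K r_ge _.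
  by have /ler_normlP[+ _] := a_ge 0; rewrite b0 expr1n mulr1 opprB.
rewrite b_S.
exact: large_invariant_step d_gt2 (a_ge0 _) (b_ge0 _) r_ge0 (a_ge _) IH1 IH2.
Qed.

Lemma step_bound_large n : (1 <= n)%N -> (K ^+ d) ^+ 2 <= r ->
  M n ^+ d <= T n * M n.+1 /\ M n.+1 <= T n * M n ^+ d.
Proof.
case: n => // n _ r_ge; have [ba rba] := large_invariant n r_ge.
have b_le_a : b n.+1 <= a n.+1 by have := b_ge0 n.+1; lra.
have [lo up] := max_step_large d_gt0 (b_ge0 _) r_ge0 b_le_a (a_le _) (a_ge _) rba.
have T2 : 2 <= T n.+1 by apply: le_trans (K_ge2_expn _) (T_ge _); rewrite ?addn2.
rewrite -M_S in lo up; split.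
  by apply: le_trans lo _; rewrite ler_wpM2r ?M_ge0.
by apply: le_trans up _; rewrite ler_wpM2r ?exprn_ge0 ?M_ge0.
Qed.

Lemma step_bound n : (1 <= n)%N ->
  M n ^+ d <= T n * M n.+1 /\ M n.+1 <= T n * M n ^+ d.
Proof.
move=> n_ge1; have [r_ge|r_lt] := leP ((K ^+ d) ^+ 2) r.
  exact: step_bound_large.
split; last exact: step_upper_moderate.
have [r_le_half|r_gt_half] := leP (2 * r) 1.
  exact: step_lower_small.
exact: step_lower_moderate (ltW r_gt_half) r_lt.
Qed.
End StepBound.

Lemma ln_dist_le (R : realType) (x y t : R) : 0 < x -> 0 < y ->
  x <= t * y -> y <= t * x -> `|ln y - ln x| <= ln t.
Proof.
move=> x_gt0 y_gt0 xy yx.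
have t_gt0 : 0 < t by rewrite -(pmulr_lgt0 _ y_gt0) (lt_le_trans x_gt0).
have lxy : ln x <= ln t + ln y by rewrite -lnM ?posrE // ler_ln ?posrE ?mulr_gt0.
have lyx : ln y <= ln t + ln x by rewrite -lnM ?posrE // ler_ln ?posrE ?mulr_gt0.
by rewrite ler_norml; lra.
Qed.

Lemma cvgn_telescope (R : realType) (U G : nat -> R) :
  G @ \oo --> 0 -> (forall n, `|U n.+1 - U n| <= G n - G n.+1) ->
  cvgn U /\ forall n, `|limn U - U n| <= G n.
Proof.
move=> G_cvg dU.
have G_noninc : nonincreasing_seq G.
  by apply/nonincreasing_seqP => n; have := dU n; have := normr_ge0 (U n.+1 - U n); lra.
have G_ge0 n : 0 <= G n.
  by rewrite -(cvg_lim _ G_cvg) //; apply: nonincreasing_cvgn_ge => //; exact: cvgP G_cvg.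
pose W n := U n - G n; pose V n := U n + G n.
have W_nondec : nondecreasing_seq W.
  by apply/nondecreasing_seqP => n; have := dU n; rewrite /W ler_norml; lra.
have V_noninc : nonincreasing_seq V.
  by apply/nonincreasing_seqP => n; have := dU n; rewrite /V ler_norml; lra.
have W_cvg : cvgn W.
  apply: nondecreasing_is_cvgn => //; exists (V 0) => _ [n _ <-].
  by apply: le_trans (V_noninc _ _ (leq0n n)); rewrite /W /V; have := G_ge0 n; lra.
have G_cvgn : cvgn G by exact: cvgP G_cvg.
have UE : U = W + G by apply/funext => n; rewrite /W /= subrK.
have U_cvg : cvgn U by rewrite UE; exact: is_cvgD.
have V_cvg : cvgn V by exact: is_cvgD.
have limG : limn G = 0 by exact: cvg_lim.
have limW : limn W = limn U.
  by have := limD W_cvg G_cvgn; rewrite -UE limG addr0 => ->.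
have limV : limn V = limn U.
  by have := limD U_cvg G_cvgn; rewrite limG addr0 => ->.
split => // n.
have := nondecreasing_cvgn_le W_nondec W_cvg n.
have := nonincreasing_cvgn_ge V_noninc V_cvg n.
by rewrite limW limV /W /V ler_norml; lra.
Qed.

Lemma cvgn_scaled (R : realType) (w : nat -> R) (x c : R) : 1 < x -> 0 <= c ->
  (forall n, (1 <= n)%N -> `|w n.+1 - x * w n| <= c * (x - 1) ^+ n) ->
  let u := fun n => w n / x ^+ n in
  cvgn u /\ forall n, (1 <= n)%N -> `|limn u - u n| <= c * ((x - 1) / x) ^+ n.
Proof.
move=> x_gt1 c_ge0 dw u.
have x_neq0 : x != 0 by rewrite gt_eqF // (lt_trans ltr01).
set q := (x - 1) / x.
have q_ge0 : 0 <= q by rewrite divr_ge0 //; lra.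
have q_lt1 : q < 1 by rewrite ltr_pdivrMr; lra.
pose G n := c * q ^+ n.+1.
have G_cvg : G @ \oo --> 0.
  have -> : G = geometric (c * q) q.
    by apply/funext => n; rewrite /G /geometric /= exprS mulrA.
  by apply: cvg_geometric; rewrite ger0_norm.
have dG n : G n - G n.+1 = c * (x - 1) ^+ n.+1 / x ^+ n.+2.
  rewrite /G /q !expr_div_n (exprS (x - 1) n.+1) (exprS x n.+1).
  by field; rewrite expf_neq0.
have dU n : `|u n.+2 - u n.+1| <= G n - G n.+1.
  have xn_gt0 : 0 < x ^+ n.+2 by rewrite exprn_gt0 // (lt_trans ltr01).
  have -> : u n.+2 - u n.+1 = (w n.+2 - x * w n.+1) / x ^+ n.+2.
    by rewrite /u [x ^+ n.+2]exprS; field; rewrite expf_neq0.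
  rewrite dG normrM [`|_^-1|]gtr0_norm ?invr_gt0 //.
  by apply: ler_wpM2r; [rewrite invr_ge0 ltW | exact: dw].
have [U_cvg U_lim] := cvgn_telescope G_cvg dU.
have u_cvg : u @ \oo --> limn (fun n => u n.+1) by rewrite -cvg_shiftS.
split; first exact: cvgP u_cvg.
by case=> // n _; rewrite (cvg_lim _ u_cvg) // U_lim.
Qed.

Lemma max_inv_bounds (R : realFieldType) (x : R) : 0 < x ->
  [/\ 1 <= Num.max x x^-1, x <= Num.max x x^-1 & 1 <= Num.max x x^-1 * x].
Proof.
move=> x_gt0; have xL : x <= Num.max x x^-1 by rewrite le_max lexx.
have xVL : x^-1 <= Num.max x x^-1 by rewrite le_max lexx orbT.
have Lx : 1 <= Num.max x x^-1 * x.
  by have := ler_wpM2r (ltW x_gt0) xVL; rewrite mulVf // gt_eqF.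
split=> //; have [x_ge1|x_lt1] := leP 1 x; first exact: le_trans xL.
by apply: le_trans xVL; rewrite invf_ge1 // ltW.
Qed.

Lemma ln_Mnv_step (R : realType) (v : algC -> R) d alpha lambda n :
  is_absval v -> (2 < d)%N -> alpha != 0 -> lambda != 0 -> (1 <= n)%N ->
  `|ln (Mnv v d alpha lambda n.+1) - d%:R * ln (Mnv v d alpha lambda n)|
    <= d.+2%:R * ln (2 * Num.max (v alpha) (v alpha)^-1) * (d%:R - 1) ^+ n.
Proof.
move=> hv d_gt2 alpha_neq0 lambda_neq0 n_ge1.
have [L_ge1 alpha_le aL_ge1] := max_inv_bounds (absval_gt0 hv alpha_neq0).
set L := Num.max _ _ in L_ge1 alpha_le aL_ge1 *.
have d_gt0 : (0 < d)%N by lia.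
have K_ge2 : 2 <= 2 * L by lra.
have KL : 2 * L / 2 = L by field.
have a0_ge : 1 <= 2 * L / 2 * v alpha by rewrite KL.
have a0_le : v alpha <= 2 * L / 2 by rewrite KL.
have [lo up] := step_bound (a := fun m => v (AB d alpha lambda m).1)
  (b := fun m => v (AB d alpha lambda m).2) d_gt2 K_ge2 (absval_ge0 hv lambda)
  (fun m => absval_ge0 hv _) (fun m => absval_ge0 hv _) (absval1 hv) a0_ge a0_le
  (absval_AB1_le _ _ _ hv) (absval_AB1_ge _ _ _ hv) (absval_AB2 _ _ _ hv) n_ge1.
have M_gt0 m : 0 < Mnv v d alpha lambda m by exact: Mnv_gt0.
have := ln_dist_le (exprn_gt0 d (M_gt0 n)) (M_gt0 n.+1) lo up.
have K_gt0 : 0 < 2 * L by lra.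
rewrite (lnXn d (M_gt0 n)) (lnXn _ K_gt0) -[_ *+ d]mulr_natl -[_ *+ (_ * _)]mulr_natl.
by rewrite natrM natrX -subn1 natrB // => h; lra.
Qed.

Theorem proposition5p8 (R : realType) (d : nat) (alpha lambda : algC)
  (v : algC -> R) :
  (2 < d)%N -> alpha != 0 -> lambda != 0 -> is_absval v ->
  forall n0 : nat, (1 <= n0)%N ->
  let u := fun n : nat => ln (Mnv v d alpha lambda n) / (d%:R ^+ n) in
  let L := Num.max (v alpha) (v alpha)^-1 in
  cvgn u /\
  `| limn u - u n0 | <= (3 * d - 2)%:R * ln (2 * L).
Proof.
move=> d_gt2 alpha_neq0 lambda_neq0 hv n0 n0_ge1 u L.
have L_ge1 : 1 <= L by case: (max_inv_bounds (absval_gt0 hv alpha_neq0)).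
have lnK_ge0 : 0 <= ln (2 * L) by rewrite ln_ge0 //; lra.
have d_gt1 : 1 < d%:R :> R by rewrite ltr1n; lia.
have c_ge0 : 0 <= d.+2%:R * ln (2 * L) by rewrite mulr_ge0.
have [u_cvg u_lim] := cvgn_scaled d_gt1 c_ge0
  (fun n => ln_Mnv_step (n := n) hv d_gt2 alpha_neq0 lambda_neq0).
split => //; apply: le_trans (u_lim n0 n0_ge1) _.
have q_le1 : ((d%:R - 1) / d%:R) ^+ n0 <= 1 :> R.
  by rewrite exprn_ile1 // ?divr_ge0 ?ler_pdivrMr; lra.
have : (d.+2 <= 3 * d - 2)%N by lia.
rewrite -(ler_nat R) => d_le.
apply: le_trans (ler_piMr c_ge0 q_le1) _.
by apply: ler_wpM2r.
Qed.
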